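(* Let $\nu>0$, let $K$ be a smooth positive function, let $J(u)=\int K(u)\,du$ be an antiderivative of $K$, and let $A,B,D$ be constants with $D\neq 0$. (i) If $A\neq 0$ and $C(u)=D\,K(u)\left(AJ(u)+B\right)^{1/A}$ (on a range of $u$ where $AJ(u)+B>0$), then the equation $C(u)u_t=z^{-\nu}\left(K(u)z^{\nu}u_z\right)_z$ admits the Lie point symmetry generator $$Y_3=z\partial_z-2\,\frac{AJ(u)+B}{K(u)}\,\partial_u .$$ (ii) If $B\neq 0$ and $C(u)=D\,K(u)\exp\!\left(\frac{1}{B}J(u)\right)$, then the same equation admits the generator $Y_3=z\partial_z-\frac{2B}{K(u)}\partial_u$.
   Context: Here $u=u(z,t)$ with $z>0$, $t>0$. A vector field $Y=\xi\partial_z+\tau\partial_t+\eta\partial_u$ (coefficients depending on $z,t,u$) is an admitted Lie point symmetry generator of the equation if its second prolongation annihilates $C(u)u_t-K'(u)u_z^2-K(u)u_{zz}-\frac{\nu}{z}K(u)u_z$ on the solution manifold of the equation (equivalently, the one-parameter local group it generates maps solutions to solutions). *)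

From Stdlib Require Import Reals.
From Coquelicot Require Import Coquelicot.
Open Scope R_scope.

Definition fn3 := R -> R -> R -> R.

Definition pz (f : fn3) z t u := Derive (fun x => f x t u) z.
Definition pt (f : fn3) z t u := Derive (fun x => f z x u) t.
Definition pu (f : fn3) z t u := Derive (fun x => f z t x) u.

Definition Dz3 (f : fn3) z t u uz := pz f z t u + uz * pu f z t u.
Definition Dt3 (f : fn3) z t u ut := pt f z t u + ut * pu f z t u.

Definition etaZ (xi tau eta : fn3) z t u uz ut :=
  Dz3 eta z t u uz - uz * Dz3 xi z t u uz - ut * Dz3 tau z t u uz.
Definition etaT (xi tau eta : fn3) z t u uz ut :=
  Dt3 eta z t u ut - uz * Dt3 xi z t u ut - ut * Dt3 tau z t u ut.

Definition Dz5 (g : R -> R -> R -> R -> R -> R) z t u uz ut uzz uzt :=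
  Derive (fun x => g x t u uz ut) z + uz * Derive (fun x => g z t x uz ut) u
  + uzz * Derive (fun x => g z t u x ut) uz + uzt * Derive (fun x => g z t u uz x) ut.
Definition Dt5 (g : R -> R -> R -> R -> R -> R) z t u uz ut uzt utt :=
  Derive (fun x => g z x u uz ut) t + ut * Derive (fun x => g z t x uz ut) u
  + uzt * Derive (fun x => g z t u x ut) uz + utt * Derive (fun x => g z t u uz x) ut.

Definition etaZZ (xi tau eta : fn3) z t u uz ut uzz uzt :=
  Dz5 (etaZ xi tau eta) z t u uz ut uzz uzt
  - uzz * Dz3 xi z t u uz - uzt * Dz3 tau z t u uz.
Definition etaZT (xi tau eta : fn3) z t u uz ut uzz uzt utt :=
  Dt5 (etaZ xi tau eta) z t u uz ut uzt utt
  - uzz * Dt3 xi z t u ut - uzt * Dt3 tau z t u ut.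
Definition etaTT (xi tau eta : fn3) z t u uz ut uzt utt :=
  Dt5 (etaT xi tau eta) z t u uz ut uzt utt
  - uzt * Dt3 xi z t u ut - utt * Dt3 tau z t u ut.

(* A second-order differential function F(z,t,u,u_z,u_t,u_zz,u_zt,u_tt). *)
Definition fn8 := R -> R -> R -> R -> R -> R -> R -> R -> R.

(* The second prolongation pr^(2) Y of Y = xi d_z + tau d_t + eta d_u,
   applied to F, at a jet point. *)
Definition pr2 (xi tau eta : fn3) (F : fn8) z t u uz ut uzz uzt utt :=
    xi z t u * Derive (fun x => F x t u uz ut uzz uzt utt) z
  + tau z t u * Derive (fun x => F z x u uz ut uzz uzt utt) t
  + eta z t u * Derive (fun x => F z t x uz ut uzz uzt utt) u
  + etaZ xi tau eta z t u uz ut * Derive (fun x => F z t u x ut uzz uzt utt) uz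
  + etaT xi tau eta z t u uz ut * Derive (fun x => F z t u uz x uzz uzt utt) ut
  + etaZZ xi tau eta z t u uz ut uzz uzt * Derive (fun x => F z t u uz ut x uzt utt) uzz
  + etaZT xi tau eta z t u uz ut uzz uzt utt * Derive (fun x => F z t u uz ut uzz x utt) uzt
  + etaTT xi tau eta z t u uz ut uzt utt * Derive (fun x => F z t u uz ut uzz uzt x) utt.

Definition admits_symmetry (dom : R -> R -> R -> Prop) (xi tau eta : fn3) (F : fn8) : Prop :=
  forall z t u uz ut uzz uzt utt,
    dom z t u ->
    F z t u uz ut uzz uzt utt = 0 ->
    pr2 xi tau eta F z t u uz ut uzz uzt utt = 0.

(* The equation C(u)u_t - K'(u)u_z^2 - K(u)u_zz - (nu/z)K(u)u_z = 0,
   i.e. C(u) u_t = z^{-nu} (K(u) z^nu u_z)_z. *)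
Definition radialF (nu : R) (C K : R -> R) : fn8 :=
  fun z t u uz ut uzz uzt utt =>
    C u * ut - Derive K u * uz ^ 2 - K u * uzz - nu / z * K u * uz.

From Stdlib Require Import Reals Lra.
From Coquelicot Require Import Coquelicot.
Open Scope R_scope.

(* For Y = z d_z + E(u) d_u a direct computation gives
     pr2 Y F = (E K'/K + E' - 2) F + u_t I1(u) + u_z^2 I2(u),
   so Y is a symmetry as soon as the two determining expressions I1, I2 vanish.
   Writing E = -2 G/K, one finds I2 = 2 K (G'/K)', which vanishes when G' = a K,
   as for G = A J + B and G = B; and I1 = 2 (K phi - G phi') with phi = C/K, which
   vanishes when phi = D exp L with L' = K/G, i.e. phi = D (A J + B)^(1/A) and
   phi = D exp (J/B) respectively. *)

(* [auto_derive] leaves equations over [R_AbsRing] with eta-expanded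
   [Derive (fun x => f x)], which [ring], [field] and [rewrite] do not identify
   with [Derive f]. *)
Ltac normalize_Derive_goal :=
  match goal with |- ?a = ?b => change (@eq R a b) end;
  repeat match goal with
  | |- context [Derive (fun x => ?f x)] => change (Derive (fun x => f x)) with (Derive f)
  end.

Definition determining_ut (C K E : R -> R) u :=
  E u * Derive C u - E u * Derive K u * C u / K u + 2 * C u.

Definition determining_uz2 (K E : R -> R) u :=
  - E u * Derive (Derive K) u - Derive K u * Derive E u - K u * Derive (Derive E) u
  + E u * Derive K u ^ 2 / K u.

Lemma etaZ_scaling (E : R -> R) z t u uz ut :
  etaZ (fun z _ _ => z) (fun _ _ _ => 0) (fun _ _ u => E u) z t u uz ut
  = uz * (Derive E u - 1).
Proof.
  unfold etaZ, Dz3, pz, pu. rewrite !Derive_const, Derive_id.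
  normalize_Derive_goal. ring.
Qed.

Lemma etaT_scaling (E : R -> R) z t u uz ut :
  etaT (fun z _ _ => z) (fun _ _ _ => 0) (fun _ _ u => E u) z t u uz ut
  = ut * Derive E u.
Proof. unfold etaT, Dt3, pt, pu. rewrite !Derive_const. normalize_Derive_goal. ring. Qed.

Lemma etaZZ_scaling (E : R -> R) z t u uz ut uzz uzt :
  ex_derive (Derive E) u ->
  etaZZ (fun z _ _ => z) (fun _ _ _ => 0) (fun _ _ u => E u) z t u uz ut uzz uzt
  = uz ^ 2 * Derive (Derive E) u + uzz * (Derive E u - 2).
Proof.
  intro HE2. unfold etaZZ, Dz5, Dz3, pz, pu.
  rewrite (Derive_ext _ _ _ (fun x => etaZ_scaling E x t u uz ut)).
  rewrite (Derive_ext _ _ _ (fun x => etaZ_scaling E z t x uz ut)).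
  rewrite (Derive_ext _ _ _ (fun x => etaZ_scaling E z t u x ut)).
  rewrite (Derive_ext _ _ _ (fun x => etaZ_scaling E z t u uz x)).
  rewrite !Derive_const, Derive_id.
  replace (Derive (fun x => uz * (Derive E x - 1)) u) with (uz * Derive (Derive E) u).
  2:{ symmetry. apply is_derive_unique. auto_derive. exact HE2. normalize_Derive_goal. ring. }
  replace (Derive (fun x => x * (Derive E u - 1)) uz) with (Derive E u - 1).
  2:{ symmetry. apply is_derive_unique. auto_derive. exact I. ring. }
  ring.
Qed.

Lemma pr2_radialF_scaling (nu : R) (C K E : R -> R) z t u uz ut uzz uzt utt :
  z <> 0 -> K u <> 0 ->
  ex_derive C u -> ex_derive K u -> ex_derive (Derive K) u -> ex_derive (Derive E) u ->
  pr2 (fun z _ _ => z) (fun _ _ _ => 0) (fun _ _ u => E u) (radialF nu C K)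
    z t u uz ut uzz uzt utt
  = (E u * Derive K u / K u + Derive E u - 2) * radialF nu C K z t u uz ut uzz uzt utt
    + ut * determining_ut C K E u + uz ^ 2 * determining_uz2 K E u.
Proof.
  intros Hz HK HC HK1 HK2 HE2.
  unfold pr2. rewrite etaZ_scaling, etaT_scaling, etaZZ_scaling by exact HE2.
  unfold radialF, determining_ut, determining_uz2.
  rewrite !Derive_const.
  replace (Derive (fun x => C u * ut - Derive K u * uz ^ 2 - K u * uzz - nu / x * K u * uz) z)
    with (nu / z ^ 2 * K u * uz).
  2:{ symmetry. apply is_derive_unique. auto_derive. exact Hz. field. exact Hz. }
  replace (Derive (fun x => C x * ut - Derive K x * uz ^ 2 - K x * uzz - nu / z * K x * uz) u)
    with (Derive C u * ut - Derive (Derive K) u * uz ^ 2 - Derive K u * uzz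
          - nu / z * Derive K u * uz).
  2:{ symmetry. apply is_derive_unique. auto_derive. tauto. normalize_Derive_goal. ring. }
  replace (Derive (fun x => C u * ut - Derive K u * x ^ 2 - K u * uzz - nu / z * K u * x) uz)
    with (- 2 * Derive K u * uz - nu / z * K u).
  2:{ symmetry. apply is_derive_unique. auto_derive. exact I. ring. }
  replace (Derive (fun x => C u * x - Derive K u * uz ^ 2 - K u * uzz - nu / z * K u * uz) ut)
    with (C u).
  2:{ symmetry. apply is_derive_unique. auto_derive. exact I. ring. }
  replace (Derive (fun x => C u * ut - Derive K u * uz ^ 2 - K u * x - nu / z * K u * uz) uzz)
    with (- K u).
  2:{ symmetry. apply is_derive_unique. auto_derive. exact I. ring. }
  field. split; assumption.
Qed.

Lemma radialF_admits_scaling (nu : R) (C K E : R -> R) (U : R -> Prop) :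
  (forall x, K x <> 0) -> (forall x, ex_derive K x) -> (forall x, ex_derive (Derive K) x) ->
  (forall u, U u -> ex_derive C u) -> (forall u, U u -> ex_derive (Derive E) u) ->
  (forall u, U u -> determining_ut C K E u = 0) ->
  (forall u, U u -> determining_uz2 K E u = 0) ->
  admits_symmetry (fun z _ u => z <> 0 /\ U u)
    (fun z _ _ => z) (fun _ _ _ => 0) (fun _ _ u => E u) (radialF nu C K).
Proof.
  intros HK HK1 HK2 HC HE2 Hut Huz2 z t u uz ut uzz uzt utt [Hz HU] HF.
  rewrite pr2_radialF_scaling, HF, Hut, Huz2 by auto.
  ring.
Qed.

Lemma admits_symmetry_weaken (dom dom' : R -> R -> R -> Prop) xi tau eta F :
  (forall z t u, dom z t u -> dom' z t u) ->
  admits_symmetry dom' xi tau eta F -> admits_symmetry dom xi tau eta F.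
Proof. intros Hdom Hsym z t u uz ut uzz uzt utt Hd. apply Hsym, Hdom, Hd. Qed.

Section ScalingPotential.

Variables (a : R) (K G E : R -> R).
Hypotheses (K_neq0 : forall x, K x <> 0) (K_derivable : forall x, ex_derive K x)
  (DK_derivable : forall x, ex_derive (Derive K) x)
  (G_derive : forall x, is_derive G x (a * K x))
  (E_def : forall x, E x = -2 * (G x / K x)).

Lemma Derive_scaling_eta x : Derive E x = -2 * a + 2 * G x * Derive K x / K x ^ 2.
Proof.
  rewrite (Derive_ext _ _ _ E_def).
  apply is_derive_unique. auto_derive.
  - split; [exact (ex_intro _ _ (G_derive x)) | split; auto].
  - normalize_Derive_goal. rewrite (is_derive_unique _ _ _ (G_derive x)). field. auto.
Qed.

Lemma is_derive_Derive_scaling_eta u :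
  is_derive (Derive E) u
    (2 * (a * K u * Derive K u + G u * Derive (Derive K) u) / K u ^ 2
     - 4 * G u * Derive K u ^ 2 / K u ^ 3).
Proof.
  apply (is_derive_ext (fun x => -2 * a + 2 * G x * Derive K x / K x ^ 2)).
  { intro x. symmetry. apply Derive_scaling_eta. }
  auto_derive.
  - repeat split; auto. exact (ex_intro _ _ (G_derive u)).
  - normalize_Derive_goal. rewrite (is_derive_unique _ _ _ (G_derive u)). field. auto.
Qed.

Lemma determining_uz2_scaling_eta u : determining_uz2 K E u = 0.
Proof.
  unfold determining_uz2.
  rewrite (is_derive_unique _ _ _ (is_derive_Derive_scaling_eta u)).
  rewrite Derive_scaling_eta, E_def.
  field. auto.
Qed.

Lemma determining_ut_scaling_eta (D : R) (P : R -> R) u p :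
  is_derive P u p -> G u * p = K u * P u ->
  determining_ut (fun x => D * K x * P x) K E u = 0.
Proof.
  intros HP HGP. unfold determining_ut.
  replace (Derive (fun x => D * K x * P x) u) with (D * (Derive K u * P u + K u * p)).
  2:{ symmetry. apply is_derive_unique. auto_derive.
      - repeat split; [apply K_derivable | exact (ex_intro _ _ HP)].
      - normalize_Derive_goal. rewrite (is_derive_unique _ _ _ HP). ring. }
  rewrite E_def.
  transitivity (-2 * D * (G u * p - K u * P u)); [field; auto | rewrite HGP; ring].
Qed.

Lemma radialF_admits_scaling_potential (nu D : R) (L : R -> R) (U : R -> Prop) :
  (forall u, U u -> G u <> 0) -> (forall u, U u -> is_derive L u (K u / G u)) ->
  admits_symmetry (fun z _ u => z <> 0 /\ U u)
    (fun z _ _ => z) (fun _ _ _ => 0) (fun _ _ u => E u)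
    (radialF nu (fun x => D * K x * exp (L x)) K).
Proof.
  intros HG HL.
  assert (Hexp : forall u, U u ->
            is_derive (fun x => exp (L x)) u (K u / G u * exp (L u))).
  { intros u HU. apply (is_derive_comp exp L); [apply is_derive_exp | auto]. }
  apply radialF_admits_scaling; auto.
  - intros u HU. auto_derive.
    repeat split; [apply K_derivable | exact (ex_intro _ _ (HL u HU))].
  - intros u _. exact (ex_intro _ _ (is_derive_Derive_scaling_eta u)).
  - intros u HU. apply (determining_ut_scaling_eta D _ u _ (Hexp u HU)). field. auto.
  - intros u _. apply determining_uz2_scaling_eta.
Qed.

End ScalingPotential.

Theorem mainTheorem2 (nu : R) (K J : R -> R) :
  0 < nu ->
  (forall n x, ex_derive_n K n x) ->
  (forall x, 0 < K x) ->
  (forall x, is_derive J x (K x)) ->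
  (* (i) *)
  (forall A B D : R, A <> 0 -> D <> 0 ->
     admits_symmetry
       (fun z t u => 0 < z /\ 0 < t /\ 0 < A * J u + B)
       (fun z t u => z) (fun z t u => 0)
       (fun z t u => - 2 * ((A * J u + B) / K u))
       (radialF nu (fun u => D * K u * Rpower (A * J u + B) (1 / A)) K))
  /\
  (* (ii) *)
  (forall B D : R, B <> 0 -> D <> 0 ->
     admits_symmetry
       (fun z t u => 0 < z /\ 0 < t)
       (fun z t u => z) (fun z t u => 0)
       (fun z t u => - (2 * B / K u))
       (radialF nu (fun u => D * K u * exp (1 / B * J u)) K)).
Proof.
  intros _ HKn HKpos HJ.
  assert (HK0 : forall x, K x <> 0) by (intro x; apply Rgt_not_eq, HKpos).
  assert (HK1 : forall x, ex_derive K x) by exact (HKn 1%nat).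
  assert (HK2 : forall x, ex_derive (Derive K) x) by exact (HKn 2%nat).
  split.
  - intros A B D HA _.
    apply admits_symmetry_weaken with (fun z _ u => z <> 0 /\ 0 < A * J u + B).
    { intros z t u (Hz & _ & HG). split; [apply Rgt_not_eq |]; assumption. }
    unfold Rpower.
    apply (radialF_admits_scaling_potential A K (fun x => A * J x + B)); auto.
    + intro x. auto_derive. exact (ex_intro _ _ (HJ x)).
      normalize_Derive_goal. rewrite (is_derive_unique _ _ _ (HJ x)). ring.
    + intros u HG. lra.
    + intros u HG. auto_derive.
      * split; [exact (ex_intro _ _ (HJ u)) | lra].
      * normalize_Derive_goal. rewrite (is_derive_unique _ _ _ (HJ u)). field. lra.
  - intros B D HB _.
    apply admits_symmetry_weaken with (fun z _ (_ : R) => z <> 0 /\ True).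
    { intros z t u (Hz & _). split; [apply Rgt_not_eq |]; auto. }
    apply (radialF_admits_scaling_potential 0 K (fun _ => B)); auto.
    + intro x. auto_derive. exact I. ring.
    + intro x. field. auto.
    + intros u _. auto_derive. exact (ex_intro _ _ (HJ u)).
      normalize_Derive_goal. rewrite (is_derive_unique _ _ _ (HJ u)). field. exact HB.
Qed.
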